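(* Let $(S,\mathcal{T})$ be a configuration with $|S|=k$ and $\mathcal{T}=(T_1,T_2)$, and let $V_1$ be a fixed total order on $C=\{c_1,\ldots,c_m\}$. Then the number of total orders $V_2$ on $C$ such that the election $(C,(V_1,V_2))$ avoids $(S,\mathcal{T})$ equals $S_m(\pi,\pi^{-1})$, where $\pi=p(T_1,T_2)$.
   Context: An election $(C,\mathcal{P})$ is a set $C$ of candidates with a tuple $\mathcal{P}=(V_1,\ldots,V_n)$ of total orders on $C$. A configuration $(S,\mathcal{T})$ is a finite set $S$ with a tuple $\mathcal{T}=(T_1,\ldots,T_l)$ of total orders on $S$. The election contains the configuration if there are injective maps $f:\{1,\ldots,l\}\to\{1,\ldots,n\}$ and $g:S\to C$ such that for all distinct $x,y\in S$ and all $i$, $T_i$ ranking $x$ above $y$ implies $V_{f(i)}$ ranks $g(x)$ above $g(y)$; otherwise it avoids it. For two total orders $T_1,T_2$ on the same $k$-element set, $p(T_1,T_2)$ is the $k$-permutation mapping $i$ to $j$ whenever the $i$-th highest ranked element of $T_1$ is the $j$-th highest ranked element of $T_2$. A $k$-permutation $\pi$ is contained as a pattern in an $m$-permutation $\tau$ if there is a strictly increasing $\mu:\{1,\ldots,k\}\to\{1,\ldots,m\}$ with $(\mu(\pi(1)),\ldots,\mu(\pi(k)))$ a subsequence of $(\tau(1),\ldots,\tau(m))$. $S_m(\pi_1,\ldots,\pi_l)$ denotes the number of $m$-permutations avoiding (not containing) each of the patterns $\pi_1,\ldots,\pi_l$. *)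

From mathcomp Require Import all_boot all_fingroup.
Set Implicit Arguments. Unset Strict Implicit. Unset Printing Implicit Defensive.

(* A (strict) total order on a finite type T, represented by its graph:
   (x, y) \in R  means  "x is ranked above y". *)
Definition is_torder (T : finType) (R : {set T * T}) : bool :=
  [forall x, (x, x) \notin R] &&
  [forall x, forall y, forall z, ((x, y) \in R) && ((y, z) \in R) ==> ((x, z) \in R)] &&
  [forall x, forall y, (x != y) ==> ((x, y) \in R) || ((y, x) \in R)].

Definition contains (C S : finType) (n l : nat)
    (V : n.-tuple {set C * C}) (T : l.-tuple {set S * S}) : bool :=
  [exists f : {ffun 'I_l -> 'I_n}, injectiveb f &&
    [exists g : {ffun S -> C}, injectiveb g &&
      [forall x, forall y, forall i : 'I_l,
        (x != y) && ((x, y) \in tnth T i) ==> ((g x, g y) \in tnth V (f i))]]].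

Definition avoids (C S : finType) (n l : nat)
    (V : n.-tuple {set C * C}) (T : l.-tuple {set S * S}) : bool :=
  ~~ contains V T.

(* 0-based rank: number of elements ranked above x; x is the (rank+1)-th
   highest ranked element. *)
Definition rank (T : finType) (R : {set T * T}) (x : T) : nat :=
  #|[set y | (y, x) \in R]|.

Definition pcontains (k m : nat) (pi : {perm 'I_k}) (tau : {perm 'I_m}) : bool :=
  [exists mu : {ffun 'I_k -> 'I_m},
    [forall i : 'I_k, forall j : 'I_k, (i < j) ==> (mu i < mu j)] &&
    subseq [seq mu (pi i) | i <- enum 'I_k] [seq tau j | j <- enum 'I_m]].

Definition Savoid (m k : nat) (ps : seq {perm 'I_k}) : nat :=
  #|[set tau : {perm 'I_m} | all (fun p => ~~ pcontains p tau) ps]|.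

From mathcomp Require Import all_boot all_fingroup.
Set Implicit Arguments. Unset Strict Implicit. Unset Printing Implicit Defensive.

(* A total order on a finite set T is determined by its rank function, a
   bijection onto {0, ..., |T| - 1}.  Using the ranks of V1 as coordinates, the total
   orders V2 on C are exactly the orders "tau (rank c) < tau (rank c')" for
   the m-permutations tau.  An injective g : S -> C sending T1 into V1 and T2
   into V2 is then an increasing map on T1-ranks which, after relabelling by
   pi and tau, is again increasing: that is an occurrence of the pattern pi
   in tau.  Sending T1 into V2 and T2 into V1 instead gives, with the ranks of
   T2 as coordinates, an occurrence of pi^-1 in tau. *)

Section TotalOrder.
Variables (T : finType) (R : {set T * T}).

Lemma torderP : reflect
  [/\ forall x, (x, x) \notin R,
      forall x y z, (x, y) \in R -> (y, z) \in R -> (x, z) \in R &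
      forall x y, x != y -> ((x, y) \in R) || ((y, x) \in R)]
  (is_torder R).
Proof.
apply: (iffP idP) => [/andP[/andP[/forallP irr /forallP tr] /forallP tot]|[irr tr tot]].
  split=> [//|x y z xy yz|x y].
    by move/forallP: (tr x) => /(_ y) /forallP /(_ z) /implyP; apply; rewrite xy yz.
  by move/forallP: (tot x) => /(_ y) /implyP.
apply/andP; split; first (apply/andP; split); first exact/forallP.
  by do 3!apply/forallP=> ?; apply/implyP=> /andP[]; apply: tr.
by do 2!apply/forallP=> ?; apply/implyP; apply: tot.
Qed.

Hypothesis hR : is_torder R.

Lemma rank_lt x y : (x, y) \in R -> rank R x < rank R y.
Proof.
case/torderP: hR => irr tr _ xy; apply/proper_card/properP; split.
  by apply/subsetP=> z; rewrite !inE => /tr; apply.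
by exists x; rewrite !inE ?(negPf (irr x)).
Qed.

Lemma rank_ltE x y : ((x, y) \in R) = (rank R x < rank R y).
Proof.
apply/idP/idP=> [|lt_xy]; first exact: rank_lt.
case/torderP: hR => _ _ tot; have [eq_xy|ne_xy] := eqVneq x y.
  by move: lt_xy; rewrite eq_xy ltnn.
case/orP: (tot _ _ ne_xy) => // /rank_lt lt_yx.
by move: (ltn_trans lt_xy lt_yx); rewrite ltnn.
Qed.

Lemma rank_inj : injective (rank R).
Proof.
move=> x y eq_rk; apply/eqP/negPn/negP; case/torderP: hR => _ _ tot /tot.
by rewrite !rank_ltE eq_rk ltnn.
Qed.

Lemma rank_lt_card x : rank R x < #|T|.
Proof.
case/torderP: hR => irr _ _; rewrite -cardsT; apply/proper_card/properP.
by split; [exact: subsetT | exists x; rewrite !inE ?(negPf (irr x))].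
Qed.

Definition ord_rank x : 'I_#|T| := Ordinal (rank_lt_card x).

Lemma ord_rank_bij : bijective ord_rank.
Proof.
apply: inj_card_bij; last by rewrite card_ord.
by move=> x y /(congr1 val) /rank_inj.
Qed.

Lemma ord_rank_ltE x y : ((x, y) \in R) = (ord_rank x < ord_rank y).
Proof. exact: rank_ltE. Qed.

End TotalOrder.

Section IncreasingOrdinalMaps.
Variables k m : nat.
Implicit Type a : 'I_k -> 'I_m.

Lemma homo_ltn_ord_inj a : {homo a : i j / i < j} -> injective a.
Proof.
by move=> incr i j eq_a; case: (ltngtP i j) => [/incr|/incr|/val_inj //]; rewrite eq_a ltnn.
Qed.

Lemma ltn_ord_trans n : transitive (relpre val ltn : rel 'I_n).
Proof. exact: relpre_trans ltn_trans. Qed.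

Lemma sorted_enum_ord n : sorted (relpre val ltn : rel 'I_n) (enum 'I_n).
Proof. by rewrite -sorted_map val_enum_ord iota_ltn_sorted. Qed.

Lemma subseq_enum_ordP a :
  reflect {homo a : i j / i < j} (subseq (map a (enum 'I_k)) (enum 'I_m)).
Proof.
apply: (iffP idP) => [sub i j lt_ij|incr].
  have: sorted (relpre val ltn) (map a (enum 'I_k)).
    exact: (subseq_sorted (@ltn_ord_trans _) sub (sorted_enum_ord m)).
  rewrite sorted_map => /(sorted_ltn_nth (relpre_trans (@ltn_ord_trans _)) i).
  by rewrite size_enum_ord => /(_ i j); rewrite !inE !ltn_ord !nth_ord_enum; apply.
apply/subseq_uniqP; first exact: enum_uniq.
apply: (irr_sorted_eq (@ltn_ord_trans _) (fun i => ltnn i)).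
- by rewrite sorted_map; apply: sub_sorted (sorted_enum_ord k) => i j /incr.
- exact/(sorted_filter (@ltn_ord_trans _))/sorted_enum_ord.
- by move=> i; rewrite mem_filter mem_enum andbT.
Qed.

End IncreasingOrdinalMaps.

Lemma homo_ltn_ord_id n (h : 'I_n -> 'I_n) : {homo h : i j / i < j} -> h =1 id.
Proof.
move=> /subseq_enum_ordP sub i.
have /eqP map_enum: map h (enum 'I_n) == enum 'I_n.
  by rewrite -(size_subseq_leqif sub).2 size_map.
by rewrite -[in LHS](nth_ord_enum i i) -(nth_map i i) ?size_enum_ord // map_enum nth_ord_enum.
Qed.

Lemma pcontainsP k m (sigma : {perm 'I_k}) (tau : {perm 'I_m}) :
  reflect (exists2 mu : 'I_k -> 'I_m, {homo mu : i j / i < j}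
             & {homo (tau^-1)%g \o mu \o sigma : i j / i < j})
          (pcontains sigma tau).
Proof.
have subseq_tauE (s : seq 'I_m) :
    subseq s (map tau (enum 'I_m)) = subseq (map (tau^-1)%g s) (enum 'I_m).
  apply/idP/idP => [/(map_subseq (tau^-1)%g)|/(map_subseq tau)].
    by rewrite (mapK (permK tau)).
  by rewrite (mapK (permKV tau)).
apply: (iffP existsP) => [[mu /andP[/forallP incr sub]]|[mu incr incr_a]].
  exists mu => [i j lt_ij|]; first by move/forallP/(_ j)/implyP: (incr i); apply.
  by move: sub; rewrite subseq_tauE -map_comp => /(elimT (subseq_enum_ordP _)).
exists [ffun i => mu i]; apply/andP; split.
  by apply/forallP=> i; apply/forallP=> j; apply/implyP; rewrite !ffunE; apply: incr.
rewrite subseq_tauE -map_comp; apply/(introT (subseq_enum_ordP _)) => i j /incr_a.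
by rewrite /= !ffunE.
Qed.

Definition order_hom (S C : finType) (A : {set S * S}) (P : {set C * C}) (g : S -> C) :=
  [forall x, forall y, (x != y) && ((x, y) \in A) ==> ((g x, g y) \in P)].

Lemma order_homP (S C : finType) (A : {set S * S}) (P : {set C * C}) (g : S -> C) :
  reflect (forall x y, x != y -> (x, y) \in A -> (g x, g y) \in P) (order_hom A P g).
Proof.
apply: (iffP forallP) => [hom x y ne_xy xy|hom x].
  by move/forallP/(_ y)/implyP: (hom x); apply; rewrite ne_xy.
by apply/forallP=> y; apply/implyP=> /andP[]; apply: hom.
Qed.

Section EmbeddingPattern.
Variables (S C : finType) (A B : {set S * S}) (P Q : {set C * C}).
Hypotheses (hA : is_torder A) (hP : is_torder P).
Variables (sigma : {perm 'I_#|S|}) (tau : {perm 'I_#|C|}).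
Hypothesis hB : forall x y, ((x, y) \in B) = (sigma (ord_rank hA x) < sigma (ord_rank hA y)).
Hypothesis hQ : forall x y, ((x, y) \in Q) = (tau (ord_rank hP x) < tau (ord_rank hP y)).

(* With the ranks of A and P as coordinates, g is the map
   i |-> tau^-1 (mu (sigma i)) on ordinals. *)
Lemma embedding_pcontains :
  [exists g : {ffun S -> C}, injectiveb g && (order_hom A P g && order_hom B Q g)]
  = pcontains sigma tau.
Proof.
have [rkA' rkAK rkAK'] := ord_rank_bij hA.
have [rkP' rkPK rkPK'] := ord_rank_bij hP.
apply/existsP/pcontainsP => [[g /and3P[/injectiveP g_inj /order_homP gA /order_homP gB]]|].
  exists (fun i => tau (ord_rank hP (g (rkA' ((sigma^-1)%g i))))) => [i j lt_ij|i j lt_ij].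
    rewrite -hQ; apply: gB; last by rewrite hB !rkAK' !permKV.
    by apply/eqP => /(can_inj rkAK') /perm_inj eq_ij; rewrite eq_ij ltnn in lt_ij.
  rewrite /= !permK -ord_rank_ltE; apply: gA; last by rewrite ord_rank_ltE !rkAK'.
  by apply/eqP => /(can_inj rkAK') eq_ij; rewrite eq_ij ltnn in lt_ij.
case=> mu incr_mu incr_a; set a := _ \o _ \o _ in incr_a.
exists [ffun x => rkP' (a (ord_rank hA x))]; apply/and3P; split.
- apply/injectiveP=> x y; rewrite !ffunE => /(can_inj rkPK') /(homo_ltn_ord_inj incr_a).
  by move/(can_inj rkAK).
- by apply/order_homP=> x y _; rewrite !ffunE !ord_rank_ltE !rkPK'; apply: incr_a.
- apply/order_homP=> x y _; rewrite !ffunE hB hQ !rkPK' /a /= !permKV; exact: incr_mu.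
Qed.

End EmbeddingPattern.

Lemma containsP (C S : finType) n l (V : n.-tuple {set C * C}) (T : l.-tuple {set S * S}) :
  reflect (exists2 f : 'I_l -> 'I_n, injective f &
             exists2 g : {ffun S -> C}, injective g &
               forall i, order_hom (tnth T i) (tnth V (f i)) g)
          (contains V T).
Proof.
apply: (iffP existsP) => [[f /andP[/injectiveP f_inj /existsP[g /andP[/injectiveP g_inj hom]]]]|].
  exists f => //; exists g => // i; apply/order_homP=> x y ne_xy xy.
  move: hom => /forallP/(_ x)/forallP/(_ y)/forallP/(_ i)/implyP; apply.
  by rewrite ne_xy.
case=> f f_inj [g g_inj hom]; exists [ffun i => f i]; apply/andP; split.
  by apply/injectiveP=> i j; rewrite !ffunE => /f_inj.
apply/existsP; exists g; rewrite (introT (injectiveP g) g_inj).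
do 3!apply/forallP=> ?; apply/implyP=> /andP[ne_xy xy].
by rewrite ffunE; apply: (elimT (order_homP _ _ _) (hom _)).
Qed.

Lemma ord2_cases (i : 'I_2) : i = ord0 \/ i = ord_max.
Proof. by case: i => [[|[|//]]] lt_i2; [left|right]; apply: val_inj. Qed.

Lemma contains_pair (C S : finType) (V1 V2 : {set C * C}) (T1 T2 : {set S * S}) :
  contains [tuple V1; V2] [tuple T1; T2] =
  [exists g : {ffun S -> C}, injectiveb g && (order_hom T1 V1 g && order_hom T2 V2 g)] ||
  [exists g : {ffun S -> C}, injectiveb g && (order_hom T2 V1 g && order_hom T1 V2 g)].
Proof.
apply/containsP/orP => [[f f_inj [g /injectiveP g_inj hom]]|].
  have: f ord0 != f ord_max by apply/eqP => /f_inj.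
  case: (ord2_cases (f ord0)) (ord2_cases (f ord_max)) (hom ord0) (hom ord_max)
    => -> [->|->] hom0 hom1; rewrite ?eqxx //= => _; [left | right];
  by apply/existsP; exists g; rewrite g_inj hom0 hom1.
case=> /existsP[g /and3P[/injectiveP g_inj hom1 hom2]].
  by exists id => //; exists g => // i; case: (ord2_cases i) => ->.
exists (fun i : 'I_2 => if i == ord0 then ord_max else ord0).
  by move=> i j; case: (ord2_cases i) (ord2_cases j) => -> [] ->.
by exists g => // i; case: (ord2_cases i) => ->.
Qed.

Section PermOrder.
Variables (C : finType) (V : {set C * C}).
Hypothesis hV : is_torder V.

Definition perm_order (tau : {perm 'I_#|C|}) : {set C * C} :=
  [set p | tau (ord_rank hV p.1) < tau (ord_rank hV p.2)].

Lemma perm_orderE tau x y :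
  ((x, y) \in perm_order tau) = (tau (ord_rank hV x) < tau (ord_rank hV y)).
Proof. by rewrite inE. Qed.

Lemma perm_order_torder tau : is_torder (perm_order tau).
Proof.
apply/torderP; split=> [x|x y z|x y ne_xy]; rewrite !perm_orderE ?ltnn //.
  exact: ltn_trans.
case: ltngtP => // /val_inj/perm_inj/(bij_inj (ord_rank_bij hV)) eq_xy.
by rewrite eq_xy eqxx in ne_xy.
Qed.

Lemma perm_order_inj : injective perm_order.
Proof.
have [rk' _ rkK'] := ord_rank_bij hV.
move=> tau tau' eq_ord; apply/permP => a.
have incr : {homo (fun i => tau' ((tau^-1)%g i)) : i j / i < j}.
  move=> i j lt_ij; have := perm_orderE tau (rk' ((tau^-1)%g i)) (rk' ((tau^-1)%g j)).
  by rewrite !rkK' !permKV lt_ij eq_ord perm_orderE !rkK'.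
by have := homo_ltn_ord_id incr (tau a); rewrite /= permK.
Qed.

Lemma torder_perm_order W : is_torder W -> exists tau, W = perm_order tau.
Proof.
move=> hW; have [rk' rkK rkK'] := ord_rank_bij hV.
have rk_inj : injective (fun i => ord_rank hW (rk' i)).
  by move=> i j /(bij_inj (ord_rank_bij hW)) /(can_inj rkK').
by exists (perm rk_inj); apply/setP=> -[x y]; rewrite perm_orderE !permE !rkK ord_rank_ltE.
Qed.

End PermOrder.

Theorem mainTheorem3 (S C : finType) (k m : nat)
    (T1 T2 : {set S * S}) (V1 : {set C * C})
    (hS : #|S| = k) (hC : #|C| = m)
    (hT1 : is_torder T1) (hT2 : is_torder T2) (hV1 : is_torder V1)
    (pi : {perm 'I_k})
    (hpi : forall (x : S) (i : 'I_k),
        nat_of_ord i = rank T1 x -> nat_of_ord (pi i) = rank T2 x) :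
  #|[set V2 : {set C * C} | is_torder V2 && avoids [tuple V1; V2] [tuple T1; T2]]|
  = Savoid m [:: pi; pi^-1]%g.
Proof.
subst k m.
have pi_rank x : pi (ord_rank hT1 x) = ord_rank hT2 x by apply/val_inj/hpi.
have T2E x y : ((x, y) \in T2) = (pi (ord_rank hT1 x) < pi (ord_rank hT1 y)).
  by rewrite !pi_rank ord_rank_ltE.
have T1E x y : ((x, y) \in T1) = ((pi^-1)%g (ord_rank hT2 x) < (pi^-1)%g (ord_rank hT2 y)).
  by rewrite -!pi_rank !permK ord_rank_ltE.
have avoidsE tau : avoids [tuple V1; perm_order hV1 tau] [tuple T1; T2]
                   = all (fun p => ~~ pcontains p tau) [:: pi; pi^-1]%g.
  rewrite /avoids contains_pair (embedding_pcontains T2E (perm_orderE hV1 tau)).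
  by rewrite (embedding_pcontains T1E (perm_orderE hV1 tau)) /= andbT negb_or.
rewrite /Savoid -(card_imset _ (perm_order_inj (hV := hV1))); apply: eq_card => W.
rewrite inE; apply/andP/imsetP => [[/(torder_perm_order hV1)[tau ->] av]|[tau]].
  by exists tau; rewrite // inE -avoidsE.
by rewrite inE -avoidsE => av ->; split; [exact: perm_order_torder|].
Qed.
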